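(* Let $N>0$, let $\langle k\rangle>1$ (the average node degree), and let $\beta>0$, $\gamma\ge 0$, $p\ge 0$ be parameters. Consider the mean-field ODE system in which the numbers of susceptible nodes $S$, infected nodes $I$, active susceptible–susceptible edges $[SS]$ and active susceptible–infected edges $[SI]$ satisfy $$\dot S=-\beta[SI],\qquad \dot I=\beta[SI]-\gamma I,$$ $$\dot{[SI]}=\beta\left(\frac{\langle k\rangle-1}{\langle k\rangle}\,\frac{[SS][SI]-[SI]^2}{S}-[SI]\right)-(\gamma+p)[SI],$$ with initial data depending on $I_0\in(0,N/4)$ given by $S(0)=N-I_0$, $I(0)=I_0$, $[SI](0)=\langle k\rangle I_0$, $[SS](0)=\frac{\langle k\rangle N}{2}-\langle k\rangle I_0$. Let $$p_1^*=\beta\left(\frac{\langle k\rangle}{2}-\frac32\right)-\gamma,\qquad p_2^*=p_1^*-\gamma+\frac{\gamma^2}{\beta\langle k\rangle}.$$ If $p>p_2^*$, then $\lim_{I_0\to 0}\frac{1}{I_0}\ddot I(0)<0$, where $\ddot I(0)=\beta\,\dot{[SI]}(0)-\gamma\,\dot I(0)$ is computed from the system above.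
   Context: This is an SIR epidemic on an adaptive network with temporary link deactivation: susceptible–infected edges are deactivated at rate $p$, infection occurs at rate $\beta$ along active $[SI]$ edges, and infected nodes recover at rate $\gamma$. The equation for $[SI]$ arises from the edge equation $\dot{[SI]}=\beta[SSI]-\beta([SI]+[ISI])-\gamma[SI]-p[SI]$ closed by the moment closure $[ABC]\approx\frac{\langle k\rangle-1}{\langle k\rangle}\frac{[AB][BC]}{B}$ for triple links. The total number of edges is $\bar N=\langle k\rangle N/2=[SS](0)+[SI](0)$. With $R_0=\beta\langle k\rangle/\gamma$ one has $p_2^*=p_1^*-\gamma(1-1/R_0)$. *)

From Stdlib Require Import Reals.
From Coquelicot Require Import Coquelicot.
Open Scope R_scope.

Definition Sdot (beta SI : R) : R := - beta * SI.
Definition Idot (beta gamma I SI : R) : R := beta * SI - gamma * I.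
Definition SIdot (k beta gamma p S SS SI : R) : R :=
  beta * ((k - 1) / k * ((SS * SI - SI ^ 2) / S) - SI) - (gamma + p) * SI.

Definition S0 (N I0 : R) : R := N - I0.
Definition I0v (I0 : R) : R := I0.
Definition SI0 (k I0 : R) : R := k * I0.
Definition SS0 (N k I0 : R) : R := k * N / 2 - k * I0.

Definition Iddot0 (N k beta gamma p I0 : R) : R :=
  beta * SIdot k beta gamma p (S0 N I0) (SS0 N k I0) (SI0 k I0)
  - gamma * Idot beta gamma (I0v I0) (SI0 k I0).

Definition p1star (k beta gamma : R) : R := beta * (k / 2 - 3 / 2) - gamma.
Definition p2star (k beta gamma : R) : R :=
  p1star k beta gamma - gamma + gamma ^ 2 / (beta * k).

(* Dividing I''(0) by I0 leaves a rational function of I0 that is continuous at 0,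
   so the limit is its value there, which factors as [beta k (p2* - p)]. *)
From Stdlib Require Import Reals Lra.
From Coquelicot Require Import Coquelicot.
Open Scope R_scope.

(* [Iddot0 N k beta gamma p x / x] with the factor [x] cancelled; unlike the
   quotient, it is defined at [x = 0]. *)
Definition Iddot0_rate (N k beta gamma p x : R) : R :=
  beta * (beta * ((k - 1) * (k * N / 2 - 2 * k * x) / (N - x) - k) - (gamma + p) * k)
  - gamma * (beta * k - gamma).

Lemma Iddot0_div_eq (N k beta gamma p x : R) :
  0 < x < N -> k <> 0 ->
  Iddot0 N k beta gamma p x / x = Iddot0_rate N k beta gamma p x.
Proof.
  intros Hx Hk.
  unfold Iddot0, Iddot0_rate, SIdot, Idot, S0, SS0, SI0, I0v.
  field; lra.
Qed.

Lemma Iddot0_rate_0 (N k beta gamma p : R) :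
  0 < N -> k <> 0 -> beta <> 0 ->
  Iddot0_rate N k beta gamma p 0 = beta * k * (p2star k beta gamma - p).
Proof.
  intros HN Hk Hb.
  unfold Iddot0_rate, p2star, p1star.
  field; lra.
Qed.

Lemma continuous_Iddot0_rate (N k beta gamma p x : R) :
  x <> N -> continuous (Iddot0_rate N k beta gamma p) x.
Proof.
  intros HxN.
  apply continuity_pt_filterlim.
  unfold Iddot0_rate; reg; lra.
Qed.

Lemma filterlim_at_right_continuous_ext (f g : R -> R) (x eps : R) :
  0 < eps -> continuous f x ->
  (forall y, x < y < x + eps -> g y = f y) ->
  filterlim g (at_right x) (locally (f x)).
Proof.
  intros Heps Hf Hfg.
  apply filterlim_ext_loc with f.
  - exists (mkposreal eps Heps); intros y Hy Hxy; simpl in Hy.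
    apply Rabs_lt_between' in Hy.
    symmetry; apply Hfg; lra.
  - eapply filterlim_filter_le_1; [apply filter_le_within | exact Hf].
Qed.

Theorem mainTheorem2 (N k beta gamma p : R) :
  0 < N -> 1 < k -> 0 < beta -> 0 <= gamma -> 0 <= p ->
  p > p2star k beta gamma ->
  exists L : R, L < 0 /\
    filterlim (fun I0 => Iddot0 N k beta gamma p I0 / I0) (at_right 0) (locally L).
Proof.
  intros HN Hk Hb Hg Hp Hp2.
  exists (Iddot0_rate N k beta gamma p 0); split.
  - rewrite Iddot0_rate_0 by lra.
    assert (0 < beta * k) by nra.
    nra.
  - apply filterlim_at_right_continuous_ext with N; [exact HN | |].
    + apply continuous_Iddot0_rate; lra.
    + intros y Hy; apply Iddot0_div_eq; lra.
Qed.
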